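(* In the setting of the previous statement (sample space $\mathcal{X}\times\mathcal{Y}$, hypothesis set $\mathcal{H}$, learning algorithm $\mathcal{A}$ given by a Markov kernel $\mathcal{P}_{H|S}$, $S\sim\mathcal{P}^n$ i.i.d., $H=\mathcal{A}(S)$ with $\mathcal{P}_{SH}\ll\mathcal{P}_S\mathcal{P}_H$, $0$-$1$ loss, $\eta\in(0,1)$ and $E=\{(s,h):|L_{\mathcal{P}}(h)-L_s(h)|>\eta\}$), fix $\alpha>1$, let $\gamma=\frac{\alpha}{\alpha-1}$ and $\delta\in(0,1)$. If the number of samples $n$ satisfies $$n\ge\frac{I_\alpha(S;\mathcal{A}(S))+\log2+\gamma\log\left(\frac1\delta\right)}{2\eta^2},$$ then $\mathbb{P}((S,\mathcal{A}(S))\in E)\le\delta$.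
   Context: The $0$-$1$ loss is $\ell(h,(x,y))=\mathbb{1}_{h(x)\neq y}$; $L_{\mathcal{P}}(h)=\mathcal{P}(\{(x,y):h(x)\ne y\})$; for $s=((x_i,y_i))_{i=1}^n$, $L_s(h)=\frac1n\sum_{i=1}^n\mathbb{1}_{h(x_i)\ne y_i}$. Sibson's $\alpha$-mutual information is $I_\alpha(S;H)=\min_{Q_H}D_\alpha(\mathcal{P}_{SH}\|\mathcal{P}_SQ_H)$ with $D_\alpha(\mathcal{P}\|\mathcal{Q})=\frac{1}{\alpha-1}\ln\int p^\alpha q^{1-\alpha}d\mu$ the Rényi divergence. Logarithms are natural. *)

From HB Require Import structures.
From mathcomp Require Import all_boot all_order all_algebra.
From mathcomp Require Import all_classical all_reals all_analysis.

Set Implicit Arguments.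
Unset Strict Implicit.
Unset Printing Implicit Defensive.
Import Order.TTheory GRing.Theory Num.Theory.

Local Open Scope classical_set_scope.
Local Open Scope ring_scope.

Section Defs.
Context (R : realType).

(* Renyi divergence of order alpha (alpha > 1 intended):
   D_alpha(P||Q) = 1/(alpha-1) ln \int (dP/dQ)^alpha dQ  if P << Q,
   and +oo otherwise (for alpha > 1 the integrand p^alpha q^(1-alpha)
   is +oo on a set of positive P-measure where q = 0). *)
Definition renyi_div d (T : measurableType d) (alpha : R)
    (P Q : probability T R) : \bar R :=
  if pselect (P `<< Q) then
    (((alpha - 1)^-1)%:E *
      lne (\int[Q]_x (poweR (Radon_Nikodym (charge_of_finite_measure P) Q x) alpha)))%E
  else +oo%E.

Definition sibson_mi d1 d2 (TS : measurableType d1) (TH : measurableType d2)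
    (alpha : R) (PS : probability TS R) (PSH : probability (TS * TH)%type R) : \bar R :=
  ereal_inf [set renyi_div alpha PSH (PS \x Q)%E | Q in [set: probability TH R]].

Definition pop_risk d (Z : measurableType d) (P : probability Z R)
    (Hty : Type) (err : Hty -> set Z) (h : Hty) : R :=
  fine (P (err h)).

Definition emp_risk (Z : eqType) (n : nat) (Hty : Type) (err : Hty -> set Z)
    (s : n.-tuple Z) (h : Hty) : R :=
  (\sum_(i < n) (`[< err h (tnth s i) >] : nat)%:R) / n%:R.

End Defs.

Definition err01 (X : Type) (Y : eqType) (Hty : Type) (hyp : Hty -> X -> Y)
    (h : Hty) : set (X * Y) := [set z | hyp h z.1 != z.2].

Definition gap_event (R : realType) d (Z : measurableType d)
    (P : probability Z R) (n : nat) (Hty : Type) (err : Hty -> set Z)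
    (eta : R) : set (n.-tuple Z * Hty) :=
  [set sh | eta < `|pop_risk P err sh.2 - emp_risk R err sh.1 sh.2| ].

(* For a fixed hypothesis h the empirical risk is the mean of n i.i.d.
   Bernoulli(L_P(h)) variables, so by Hoeffding's inequality every section
   E_h has P^n-measure at most b = 2 exp(-2 n eta^2); integrating over h,
   (P_S x Q)(E) <= b for every distribution Q of hypotheses.  Hoelder's
   inequality with exponents alpha and gamma, applied to the density of P_SH
   with respect to P_S x Q on the event E, gives
   gamma ln P_SH(E) - ln (P_S x Q)(E) <= D_alpha(P_SH || P_S x Q), whence
   P_SH(E) <= (b exp I_alpha(S;H))^(1/gamma), which is at most delta under the
   sample size condition. *)

From HB Require Import structures.
From mathcomp Require Import all_boot all_order all_algebra.
From mathcomp Require Import all_classical all_reals all_analysis.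
From mathcomp Require Import ring lra measurable_realfun.

Set Implicit Arguments.
Unset Strict Implicit.
Unset Printing Implicit Defensive.

Import Order.TTheory GRing.Theory Num.Theory numFieldTopology.Exports.
Local Open Scope classical_set_scope.
Local Open Scope ring_scope.

Lemma convex_crit_point_min (R : realType) (f df ddf : R -> R) (c : R) :
  (forall x, is_derive x (1:R) f (df x)) -> (forall x, is_derive x (1:R) df (ddf x)) ->
  (forall x, 0 <= ddf x) -> df c = 0 -> forall t, f c <= f t.
Proof.
move=> f'df df'ddf ddf_ge0 dfc0 t.
have cont (g dg : R -> R) : (forall x, is_derive x (1:R) g (dg x)) ->
    forall a b : R, {within `[a, b], continuous g}.
  move=> g'dg a b; apply/continuous_subspaceT => x.
  by apply/differentiable_continuous/derivable1_diffP; case: (g'dg x).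
have df_nondecr a b : a <= b -> df a <= df b.
  move=> ab; rewrite -subr_ge0.
  have [x _ ->] := MVT_segment ab (fun x _ => df'ddf x) (cont _ _ df'ddf a b).
  by rewrite mulr_ge0 // subr_ge0.
have [ct|tc] := leP c t.
  rewrite -subr_ge0.
  have [x /andP[/= + _] ->] := MVT_segment ct (fun x _ => f'df x) (cont _ _ f'df c t).
  rewrite bnd_simp => cx.
  by rewrite mulr_ge0 ?subr_ge0 // -dfc0 df_nondecr.
have [x /andP[/= _ +] E] := MVT_segment (ltW tc) (fun x _ => f'df x) (cont _ _ f'df t c).
rewrite bnd_simp => xc.
rewrite -subr_ge0 -opprB E oppr_ge0 mulr_le0_ge0 ?subr_ge0 ?(ltW tc) //.
by rewrite -dfc0 df_nondecr.
Qed.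

Section BernoulliMgf.
Variables (R : realType) (p : R).
Hypothesis p01 : 0 <= p <= 1.

Let mgf (t : R) := 1 - p + p * expR t.

Lemma bernoulli_mgf_gt0 t : 0 < 1 - p + p * expR t.
Proof.
have [p0 p1] := andP p01; have e0 := expR_gt0 t.
have [->|p_neq1] := eqVneq p 1; first by rewrite subrr add0r mul1r.
by rewrite ltr_wpDr ?mulr_ge0 ?(ltW e0) // subr_gt0 lt_neqAle p_neq1.
Qed.

Let mgf_derive t : is_derive t (1:R) mgf (p * expR t).
Proof.
have -> : mgf = cst (1 - p) + p *: (expR : R -> R) by apply/funext.
by apply: trigger_derive; rewrite add0r.
Qed.

(* Hoeffding's argument: [t p + t^2/8 - ln (mgf t)] vanishes with its
   derivative at 0 and has second derivative [1/4 - q (1 - q) >= 0],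
   where [q = p e^t / mgf t]. *)
Let phi (t : R) := t * p + t ^+ 2 / 8 - ln (mgf t).
Let dphi (t : R) := p + t / 4 - p * (expR t / mgf t).
Let ddphi (t : R) := 4^-1 - p * (expR t * (1 - p)) / mgf t ^+ 2.

Let phi_derive t : is_derive t (1:R) phi (dphi t).
Proof.
have -> : phi = p \*: (id : R -> R) + 8^-1 \*: (id : R -> R) ^+ 2 - (@ln R \o mgf).
  by apply/funext => x; rewrite /phi /= mulrC [x ^+ 2 / 8]mulrC.
have h1 := is_deriveZ p (is_derive_id t (1:R)).
have h2 := is_deriveZ 8^-1 (is_deriveX 2 (is_derive_id t (1:R))).
have h3 := is_derive1_comp
  (is_derive1_ln (bernoulli_mgf_gt0 t : 0 < mgf t)) (mgf_derive t).
apply: is_derive_eq (is_deriveB (is_deriveD h1 h2) h3) _.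
have := bernoulli_mgf_gt0 t; rewrite /dphi /=; set m := mgf t => m0.
by rewrite !scaler1 -[_ *: _]/(_ * _ : R); field; rewrite gt_eqF.
Qed.

Let dphi_derive t : is_derive t (1:R) dphi (ddphi t).
Proof.
have -> : dphi = cst p + 4^-1 \*: (id : R -> R)
    - p \*: ((expR : R -> R) * (fun y => (mgf y)^-1)).
  by apply/funext => x; rewrite /dphi /= mulrC.
have h1 := is_deriveZ 4^-1 (is_derive_id t (1:R)).
have h2 := is_deriveV (lt0r_neq0 (bernoulli_mgf_gt0 t : 0 < mgf t)) (mgf_derive t).
have h3 := is_deriveZ p (is_deriveM (is_derive_expR t) h2).
apply: is_derive_eq (is_deriveB (is_deriveD (is_derive_cst p t 1) h1) h3) _.
have := bernoulli_mgf_gt0 t; rewrite /ddphi /mgf /=; set e := expR t => m0.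
by rewrite ?scaler1 -?[_ *: _]/(_ * _ : R); field; rewrite gt_eqF.
Qed.

Let ddphi_ge0 t : 0 <= ddphi t.
Proof.
rewrite /ddphi subr_ge0 ler_pdivrMr ?exprn_gt0 ?bernoulli_mgf_gt0 // -subr_ge0.
have -> : 4^-1 * mgf t ^+ 2 - p * (expR t * (1 - p))
    = 4^-1 * (1 - p - p * expR t) ^+ 2 by rewrite /mgf; field.
by rewrite mulr_ge0 ?invr_ge0 ?sqr_ge0.
Qed.

Lemma hoeffding_bernoulli_mgf t :
  1 - p + p * expR t <= expR (t * p + t ^+ 2 / 8).
Proof.
have dphi0 : dphi 0 = 0 by rewrite /dphi /mgf expR0 mulr1 subrK; field.
have := convex_crit_point_min phi_derive dphi_derive ddphi_ge0 dphi0 t.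
rewrite /phi /mgf expR0 mulr1 subrK ln1 expr0n /= !mul0r add0r subr0 subr_ge0.
by rewrite -ler_expR lnK // posrE bernoulli_mgf_gt0.
Qed.

End BernoulliMgf.

Section BernoulliProduct.
Variables (R : realType) (p : R) (n : nat).
Hypothesis p01 : 0 <= p <= 1.

Definition bern_weight (f : {ffun 'I_n -> bool}) : R :=
  \prod_i (if f i then p else 1 - p).

Definition bern_count (f : {ffun 'I_n -> bool}) : R := \sum_i (f i : nat)%:R.

Lemma bern_weight_ge0 f : 0 <= bern_weight f.
Proof.
have [p0 p1] := andP p01.
by apply: prodr_ge0 => i _; case: (f i); rewrite ?subr_ge0.
Qed.

Lemma sum_bern_weight_expR t :
  \sum_f bern_weight f * expR (t * bern_count f) = (1 - p + p * expR t) ^+ n.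
Proof.
transitivity (\sum_(f : {ffun 'I_n -> bool})
    \prod_i (if f i then p * expR t else 1 - p)).
  apply: eq_bigr => f _; rewrite mulr_sumr expR_sum -big_split /=.
  by apply: eq_bigr => i _; case: (f i); rewrite /= ?mulr1 ?mulr0 ?expR0 ?mulr1.
rewrite -(bigA_distr_bigA (fun i (b : bool) => if b then p * expR t else 1 - p)).
under eq_bigr do rewrite big_bool /= addrC.
by rewrite prodr_const card_ord.
Qed.

Lemma sum_bern_weight : \sum_f bern_weight f = 1.
Proof.
have := sum_bern_weight_expR 0; rewrite expR0 mulr1 subrK expr1n => <-.
by apply: eq_bigr => f _; rewrite mul0r expR0 mulr1.
Qed.

Lemma bern_chernoff (S : pred {ffun 'I_n -> bool}) t a :
    (forall f, S f -> t * a <= t * bern_count f) ->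
  \sum_(f | S f) bern_weight f <= expR (- (t * a) + n%:R * (t * p + t ^+ 2 / 8)).
Proof.
move=> S_ge.
have weight_ge0 f : 0 <= bern_weight f * expR (t * bern_count f - t * a).
  by rewrite mulr_ge0 ?bern_weight_ge0 ?expR_ge0.
apply: (@le_trans _ _ (\sum_(f | S f) bern_weight f * expR (t * bern_count f - t * a))).
  apply: ler_sum => f Sf; rewrite ler_peMr ?bern_weight_ge0 //.
  by rewrite -expR0 ler_expR subr_ge0 S_ge.
apply: (@le_trans _ _ (\sum_f bern_weight f * expR (t * bern_count f - t * a))).
  by rewrite [leRHS](bigID S) /= lerDl sumr_ge0.
under eq_bigr do rewrite expRD mulrA.
rewrite -mulr_suml sum_bern_weight_expR expRD mulrC expRM_natl.
have mgf_ge0 := ltW (bernoulli_mgf_gt0 p01 t).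
rewrite ler_wpM2l ?expR_ge0 // lerXn2r ?nnegrE ?expR_ge0 //.
exact: hoeffding_bernoulli_mgf.
Qed.

(* The Chernoff bound at the optimal parameter [t = 4 s eta], with [s = 1]
   for the upper tail and [s = -1] for the lower one. *)
Lemma bern_tail (S : pred {ffun 'I_n -> bool}) (s eta : R) : s ^+ 2 = 1 -> 0 <= eta ->
    (forall f, S f -> n%:R * eta <= s * (bern_count f - n%:R * p)) ->
  \sum_(f | S f) bern_weight f <= expR (- (2 * n%:R * eta ^+ 2)).
Proof.
move=> s2 eta0 S_dev.
set t := 4 * s * eta; set a := n%:R * p + s * (n%:R * eta).
have -> : - (2 * n%:R * eta ^+ 2) = - (t * a) + n%:R * (t * p + t ^+ 2 / 8).
  have -> : - (t * a) + n%:R * (t * p + t ^+ 2 / 8)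
      = - (2 * n%:R * eta ^+ 2) * s ^+ 2 by rewrite /t /a; field.
  by rewrite s2 mulr1.
apply: bern_chernoff => f /S_dev dev; rewrite -subr_ge0.
have -> : t * bern_count f - t * a
    = 4 * eta * (s * (bern_count f - n%:R * p) - s ^+ 2 * (n%:R * eta)).
  by rewrite /t /a; ring.
by rewrite s2 mul1r mulr_ge0 ?subr_ge0 // mulr_ge0.
Qed.

Lemma bern_hoeffding (eta : R) : 0 < eta ->
  \sum_(f | eta < `|p - bern_count f / n%:R|) bern_weight f
    <= 2 * expR (- (2 * n%:R * eta ^+ 2)).
Proof.
move=> eta0.
have dev f : eta < `|p - bern_count f / n%:R| ->
    n%:R * eta <= `|bern_count f - n%:R * p|.
  have [-> _|n_gt0] := posnP n; first by rewrite mul0r normr_ge0.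
  move=> /ltW; rewrite -(@ler_pM2l _ n%:R) ?ltr0n // => /le_trans; apply.
  rewrite -[X in X * _]ger0_norm ?ler0n // -normrM distrC mulrBr mulrCA.
  by rewrite mulfV ?mulr1 // pnatr_eq0 -lt0n.
rewrite (bigID (fun f => n%:R * eta <= bern_count f - n%:R * p)) /= mulr2n mulrDl mul1r.
apply: lerD.
  apply: (bern_tail (s := 1)) (ltW eta0) _ => [|f /andP[_]]; first by rewrite expr1n.
  by rewrite mul1r.
apply: (bern_tail (s := -1)) (ltW eta0) _ => [|f /andP[/dev]].
  by rewrite sqrrN expr1n.
by rewrite ler_normr mulN1r => /orP[->|].
Qed.

End BernoulliProduct.

Arguments bern_count {R n}.

Section IidDeviation.
Variables (R : realType) (d : measure_display) (Z : measurableType d).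
Variables (P : probability Z R) (n : nat) (Pn : probability (n.-tuple Z) R).
Hypothesis Pn_prod : forall A : 'I_n -> set Z, (forall i, measurable (A i)) ->
  Pn [set s | forall i, A i (tnth s i)] = (\prod_(i < n) P (A i))%E.
Variables (A : set Z) (mA : measurable A).

Let pA := fine (P A).

Let pA01 : 0 <= pA <= 1.
Proof.
by rewrite fine_ge0 ?measure_ge0 //= -lee_fin fineK ?fin_num_measure ?probability_le1.
Qed.

(* A sample is classified by the pattern of its coordinates lying in [A]; the
   law of this pattern under [Pn] is the product Bernoulli law of [bern_weight]. *)
Let pattern (s : n.-tuple Z) : {ffun 'I_n -> bool} := [ffun i => `[< A (tnth s i) >]].

Let bern_count_pattern s :
  bern_count (pattern s) = \sum_(i < n) (`[< A (tnth s i) >] : nat)%:R :> R.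
Proof. by apply: eq_bigr => i _; rewrite ffunE. Qed.

Let cylinder f := [set s | pattern s = f].

Let cylinderE f :
  cylinder f = [set s | forall i, (if f i then A else ~` A) (tnth s i)].
Proof.
apply/seteqP; split => s /=.
  by move=> <- i; rewrite ffunE; case: asboolP.
move=> sA; apply/ffunP => i; rewrite ffunE.
by have := sA i; case: (f i) => /=; case: asboolP.
Qed.

Let measurable_cylinder f : measurable (cylinder f).
Proof.
rewrite cylinderE.
have -> : [set s : n.-tuple Z | forall i, (if f i then A else ~` A) (tnth s i)]
    = \bigcap_(i in [set: 'I_n])
        ([set: n.-tuple Z] `&` (fun s => tnth s i) @^-1` (if f i then A else ~` A)).
  by apply/seteqP; split => s sA i => [_|]; [split; [|apply: sA]|case: (sA i I)].
apply: fin_bigcap_measurable; first exact: finite_finset.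
move=> i _; apply: measurable_tnth => //.
by case: (f i); [|apply: measurableC].
Qed.

Let Pn_cylinder f : Pn (cylinder f) = (bern_weight pA f)%:E.
Proof.
rewrite cylinderE (@Pn_prod (fun i => if f i then A else ~` A)) => [|i]; last first.
  by case: (f i); [|apply: measurableC].
rewrite /bern_weight -prodEFin; apply: eq_bigr => i _.
by case: (f i); rewrite ?probability_setC // ?EFinB /pA fineK ?fin_num_measure.
Qed.

Lemma iid_deviation_le (eta : R) : 0 < eta ->
  (Pn [set s : n.-tuple Z |
     (eta < `|fine (P A) - (\sum_(i < n) (`[< A (tnth s i) >] : nat)%:R) / n%:R|)%R]
   <= (2 * expR (- (2 * n%:R * eta ^+ 2)))%:E)%E.
Proof.
move=> eta0.
pose bad (f : {ffun 'I_n -> bool}) := eta < `|pA - bern_count f / n%:R|.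
pose F (k : 'I_#|{ffun 'I_n -> bool}|) := cylinder (enum_val k).
have -> : [set s : n.-tuple Z |
     eta < `|fine (P A) - (\sum_(i < n) (`[< A (tnth s i) >] : nat)%:R) / n%:R|]
    = \big[setU/set0]_(k < #|{ffun 'I_n -> bool}| | bad (enum_val k)) F k.
  apply/seteqP; split => s.
    move=> s_dev; rewrite (bigD1 (enum_rank (pattern s))) /=; last first.
      by rewrite enum_rankK /bad bern_count_pattern.
    by left; rewrite /F enum_rankK.
  rewrite -bigcup_seq_cond => -[k /andP[_ +] /= s_k].
  by rewrite -s_k /bad bern_count_pattern.
rewrite measure_bigsetU_ord => [|k|i j _ _ [s [/= s_i s_j]]].
- rewrite /F -(big_enum_val_cond (A := predT) bad (fun f => Pn (cylinder f))) /=.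
  under eq_bigr do rewrite Pn_cylinder.
  by rewrite sumEFin lee_fin bern_hoeffding.
- exact: measurable_cylinder.
by apply: enum_val_inj; rewrite -s_i -s_j.
Qed.

End IidDeviation.

Lemma product_measure_le_ysection (R : realType) d1 d2
    (T1 : measurableType d1) (T2 : measurableType d2)
    (P1 : probability T1 R) (Q : probability T2 R) (E : set (T1 * T2)) (b : R) :
    measurable E -> (forall y, P1 (ysection E y) <= b%:E)%E ->
  ((P1 \x Q) E <= b%:E)%E.
Proof.
move=> mE E_le.
rewrite (@product_measure_unique _ _ _ _ R P1 Q (P1 \x^ Q)%E) //; last first.
  by move=> A B mA mB; apply: product_measure2E.
apply: (@le_trans _ _ (\int[Q]_y cst b%:E y)%E).
  apply: ge0_le_integral => //; first exact: (measurable_fun_ysection _ mE).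
  by move=> y _; apply: E_le.
by rewrite integral_cst // [X in (_ * X)%E]probability_setT mule1.
Qed.

Lemma hoelder_event (R : realType) d (T : measurableType d)
    (mu : {measure set T -> \bar R}) (g : T -> R) (E : set T) (a K m : R) :
    measurable_fun setT g -> measurable E -> 1 < a -> (forall x, 0 <= g x) ->
    (\int[mu]_x ((g x) `^ a)%:E = K%:E)%E -> mu E = m%:E ->
  (\int[mu]_(x in E) (g x)%:E <= (K `^ a^-1 * m `^ (1 - a^-1))%:E)%E.
Proof.
move=> mg mE a1 g_ge0 gK mum.
have a0 : 0 < a by lra.
have conj_gt0 : 0 < (1 - a^-1)^-1 by rewrite invr_gt0 subr_gt0 invf_lt1.
have conj_exp : a^-1 + ((1 - a^-1)^-1)^-1 = 1 by rewrite invrK addrC subrK.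
have := hoelder mu mg (measurable_indic mE) a0 conj_gt0 conj_exp.
rewrite Lnorm1 unlock.
have -> : (\int[mu]_x `|(EFin \o (g \* \1_E)%R) x| = \int[mu]_(x in E) (g x)%:E)%E.
  rewrite [RHS]integral_mkcond; apply: eq_integral => x _.
  by rewrite /patch /= indicE; case: (x \in E); rewrite ?mulr1 ?mulr0 ?ger0_norm.
have -> : (\int[mu]_x `|(EFin \o g) x| `^ a = K%:E)%E.
  by rewrite -gK; apply: eq_integral => x _ /=; rewrite ger0_norm.
have -> : (\int[mu]_x `|(EFin \o \1_E) x| `^ (1 - a^-1)^-1 = m%:E)%E.
  rewrite -mum -[E in mu E]setIT -integral_indic //; apply: eq_integral => x _ /=.
  by rewrite indicE; case: (x \in E); rewrite /= ?normr1 ?powR1 ?normr0 ?powR0 ?gt_eqF.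
by rewrite !poweR_EFin invrK -EFinM.
Qed.

Lemma ln_le_of_hoelder (R : realType) (a p M b : R) : 1 < a -> 0 < p -> 0 < b ->
    0 < M -> p <= M `^ a^-1 * b `^ (1 - a^-1) ->
  a / (a - 1) * ln p - ln b <= (a - 1)^-1 * ln M.
Proof.
move=> a1 p0 b0 M_gt0 pMb.
have a0 : 0 < a by lra.
have ln_p : ln p <= a^-1 * ln M + (1 - a^-1) * ln b.
  rewrite -!ln_powR -lnM ?posrE ?powR_gt0 //.
  by rewrite ler_ln ?posrE ?mulr_gt0 ?powR_gt0.
have -> : (a - 1)^-1 * ln M
    = a / (a - 1) * (a^-1 * ln M + (1 - a^-1) * ln b) - ln b.
  by field; rewrite !gt_eqF ?subr_gt0.
by rewrite lerD2r ler_wpM2l // divr_ge0 ?subr_ge0 ?(ltW a0) ?(ltW a1).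
Qed.

Section RenyiEvent.
Variables (R : realType) (d : measure_display) (T : measurableType d).
Variables (Pr mu : probability T R) (a : R).
Hypotheses (a1 : 1 < a) (Pr_mu : Pr `<< mu).

Let a_gt0 : 0 < a. Proof. exact: lt_trans ltr01 a1. Qed.

Let f := Radon_Nikodym (charge_of_finite_measure Pr) mu.

(* [powR] is junk on negative reals, so the density is truncated at [0]. *)
Let g x := Num.max (fine (f x)) 0.

Let f_fin_num x : f x \is a fin_num.
Proof. exact: Radon_Nikodym_fin_num. Qed.

Let measurable_f : measurable_fun setT f.
Proof. by apply: measurable_int; exact: Radon_Nikodym_integrable. Qed.

Let measurable_g : measurable_fun setT g.
Proof. by apply: measurable_maxr => //; exact: measurableT_comp. Qed.

Let g_ge0 x : 0 <= g x.
Proof. by rewrite le_max lexx orbT. Qed.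

Let Pr_le_integral_g E : measurable E -> (Pr E <= \int[mu]_(x in E) (g x)%:E)%E.
Proof.
move=> mE.
have -> : Pr E = (\int[mu]_(x in E) f x)%E :=
  @Radon_Nikodym_integral _ _ _ (charge_of_finite_measure Pr) mu E Pr_mu mE.
rewrite integralE -[leRHS]sube0 leeB ?integral_ge0 //.
under [leRHS]eq_integral do rewrite /g EFin_max fineK //.
by under eq_integral do rewrite funeposE.
Qed.

Let integral_g_powR_le :
  (\int[mu]_x ((g x) `^ a)%:E <= \int[mu]_x poweR (f x) a)%E.
Proof.
under [leRHS]eq_integral do rewrite -[f _]fineK // poweR_EFin.
have measurable_powR (h : T -> R) : measurable_fun setT h ->
    measurable_fun setT (fun x => ((h x) `^ a)%:E).
  move=> mh; apply/measurable_EFinP.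
  exact: (@measurableT_comp _ _ _ _ _ _ (@powR R ^~ a)).
apply: ge0_le_integral => //; first by move=> x _; rewrite lee_fin powR_ge0.
- exact: measurable_powR.
- exact/measurable_powR/measurableT_comp.
move=> x _; rewrite lee_fin /g /Order.max; case: ifP => // _.
by rewrite powR0 ?powR_ge0 // gt_eqF // a_gt0.
Qed.

Let Pr_le_moment E M : measurable E -> (\int[mu]_x poweR (f x) a = M%:E)%E ->
  fine (Pr E) <= M `^ a^-1 * fine (mu E) `^ (1 - a^-1).
Proof.
move=> mE fM.
have K_ge0 : (0 <= \int[mu]_x ((g x) `^ a)%:E)%E.
  by apply: integral_ge0 => x _; rewrite lee_fin powR_ge0.
have K_fin : (\int[mu]_x ((g x) `^ a)%:E)%E \is a fin_num.
  by rewrite ge0_fin_numE // (le_lt_trans integral_g_powR_le) // fM ltry.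
have muE_fin : mu E \is a fin_num by rewrite fin_num_measure.
have := le_trans (Pr_le_integral_g mE) (hoelder_event measurable_g mE a1 g_ge0
  (esym (fineK K_fin)) (esym (fineK muE_fin))).
rewrite -[Pr E]fineK ?fin_num_measure // lee_fin => /le_trans; apply.
have inva_ge0 : 0 <= a^-1 by rewrite invr_ge0 ltW.
rewrite ler_wpM2r ?powR_ge0 // ge0_ler_powR ?nnegrE ?fine_ge0 //.
  by rewrite -lee_fin -fM integral_ge0 // => x _; exact: poweR_ge0.
by rewrite -lee_fin fineK // -fM.
Qed.

Lemma renyi_integral_ge_event E b :
    measurable E -> 0 < b -> (mu E <= b%:E)%E -> 0 < fine (Pr E) ->
  ((a / (a - 1) * ln (fine (Pr E)) - ln b)%:E
    <= ((a - 1)^-1)%:E * lne (\int[mu]_x poweR (f x) a))%E.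
Proof.
move=> mE b0 muE PrE.
have moment_ge0 : (0 <= \int[mu]_x poweR (f x) a)%E.
  by apply: integral_ge0 => x _; exact: poweR_ge0.
have [moment_fin|] := boolP ((\int[mu]_x poweR (f x) a)%E \is a fin_num); last first.
  rewrite ge0_fin_numE // -leNgt leye_eq => /eqP ->.
  by rewrite /= mulry gtr0_sg ?mul1e ?leey // invr_gt0 subr_gt0.
set M := fine (\int[mu]_x poweR (f x) a)%E.
have fM : (\int[mu]_x poweR (f x) a)%E = M%:E by rewrite fineK.
have PrM := Pr_le_moment mE fM.
have M_gt0 : 0 < M.
  rewrite lt_neqAle fine_ge0 // andbT; apply: contraTneq PrM => <-.
  by rewrite powR0 ?invr_eq0 ?gt_eqF ?mul0r -?ltNge // a_gt0.
rewrite fM lne_EFin // -EFinM lee_fin ln_le_of_hoelder // (le_trans PrM) //.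
rewrite ler_wpM2l ?powR_ge0 // ge0_ler_powR ?nnegrE ?fine_ge0 //.
- by rewrite subr_ge0 invf_le1 // ltW.
- exact: ltW.
by rewrite -lee_fin fineK ?fin_num_measure.
Qed.

End RenyiEvent.

Lemma renyi_div_ge_event (R : realType) d (T : measurableType d)
    (Pr mu : probability T R) (E : set T) (a b : R) :
    measurable E -> 1 < a -> 0 < b -> (mu E <= b%:E)%E -> 0 < fine (Pr E) ->
  ((a / (a - 1) * ln (fine (Pr E)) - ln b)%:E <= renyi_div a Pr mu)%E.
Proof.
move=> mE a1 b0 muE PrE; rewrite /renyi_div.
case: pselect => [Pr_mu|?]; last by rewrite leey.
exact: renyi_integral_ge_event.
Qed.

Lemma sibson_mi_ge_event (R : realType) d1 d2
    (TS : measurableType d1) (TH : measurableType d2)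
    (PS : probability TS R) (PSH : probability (TS * TH)%type R)
    (E : set (TS * TH)%type) (a b : R) :
    measurable E -> 1 < a -> 0 < b ->
    (forall Q : probability TH R, (PS \x Q) E <= b%:E)%E -> 0 < fine (PSH E) ->
  ((a / (a - 1) * ln (fine (PSH E)) - ln b)%:E <= sibson_mi a PS PSH)%E.
Proof.
move=> mE a1 b0 PSQ_E PSH_E; apply/ereal_infP => _ [Q _ <-].
exact: (renyi_div_ge_event mE a1 b0 (PSQ_E Q) PSH_E).
Qed.

Lemma lower_bound_le_scaled (R : realType) (x : \bar R) (l c k N : R) : 0 < k ->
  (l%:E <= x)%E -> ((x + c%:E) * k^-1%:E <= N%:E)%E -> l + c <= N * k.
Proof.
move=> k0; case: x => [x| |] lx.
- rewrite -EFinD -EFinM !lee_fin ler_pdivrMr // => /(le_trans _); apply.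
  by rewrite lerD2r -lee_fin.
- by rewrite addye // mulyr gtr0_sg ?invr_gt0 // mul1e leye_eq.
- by rewrite leeNy_eq in lx.
Qed.

Theorem corollary5 (R : realType)
  (dX dY dH : measure_display)
  (X : measurableType dX) (Y : measurableType dY) (Hty : measurableType dH)
  (hyp : Hty -> X -> Y)
  (P : probability (X * Y)%type R)
  (n : nat)
  (Pn : probability (n.-tuple (X * Y)%type) R)
  (HPn : forall A : 'I_n -> set (X * Y)%type, (forall i, measurable (A i)) ->
     Pn [set s | forall i, A i (tnth s i)] = (\prod_(i < n) P (A i))%E)
  (K : R.-pker (n.-tuple (X * Y)%type) ~> Hty)
  (PSH : probability (n.-tuple (X * Y)%type * Hty)%type R)
  (HPSH : forall C, measurable C -> PSH C = (\int[Pn]_s K s (xsection C s))%E)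
  (PH : probability Hty R)
  (HPH : forall B, measurable B -> PH B = PSH ([set: n.-tuple (X * Y)%type] `*` B))
  (Hac : PSH `<< (Pn \x PH)%E)
  (Herr : forall h, measurable (err01 hyp h))
  (eta : R) (Heta : 0 < eta < 1)
  (HE : measurable (gap_event (n:=n) P (err01 hyp) eta))
  (alpha delta : R) (Halpha : 1 < alpha) (Hdelta : 0 < delta < 1) :
  ((sibson_mi alpha Pn PSH + (ln 2 + alpha / (alpha - 1) * ln delta^-1)%:E)
      * ((2 * eta ^+ 2)^-1)%:E <= (n%:R)%:E)%E ->
  (PSH (gap_event (n:=n) P (err01 hyp) eta) <= delta%:E)%E.
Proof.
move=> n_large; have [eta0 _] := andP Heta; have [delta0 _] := andP Hdelta.
set E := gap_event _ _ _ in HE n_large *.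
set b := 2 * expR (- (2 * n%:R * eta ^+ 2)).
have b0 : 0 < b by rewrite mulr_gt0 ?expR_gt0.
have section_le h : (Pn (ysection E h) <= b%:E)%E.
  have -> : ysection E h = [set s | (eta < `|fine (P (err01 hyp h))
      - (\sum_(i < n) (`[< err01 hyp h (tnth s i) >] : nat)%:R) / n%:R|)%R].
    by apply/seteqP; split => s; rewrite /ysection /= inE.
  exact: iid_deviation_le.
have product_le (Q : probability Hty R) : ((Pn \x Q) E <= b%:E)%E :=
  product_measure_le_ysection Q HE section_le.
rewrite -[PSH E]fineK ?fin_num_measure // lee_fin leNgt; apply/negP => delta_lt.
set p := fine (PSH E) in delta_lt *.
have p0 : 0 < p := lt_trans delta0 delta_lt.
have eta2 : 0 < 2 * eta ^+ 2 by rewrite mulr_gt0 ?exprn_gt0.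
have := lower_bound_le_scaled eta2 (sibson_mi_ge_event HE Halpha b0 product_le p0) n_large.
have gamma0 : 0 < alpha / (alpha - 1).
  by rewrite divr_gt0 ?subr_gt0 // (lt_trans ltr01).
rewrite /b lnM ?posrE ?expR_gt0 // expRK lnV ?posrE // -subr_ge0.
have -> : n%:R * (2 * eta ^+ 2) - (alpha / (alpha - 1) * ln p
      - (ln 2 + - (2 * n%:R * eta ^+ 2)) + (ln 2 + alpha / (alpha - 1) * - ln delta))
    = alpha / (alpha - 1) * (ln delta - ln p) by ring.
rewrite pmulr_rge0 // subr_ge0 ler_ln ?posrE //.
by apply/negP; rewrite -ltNge.
Qed.
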